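(* Let $L$ be a finite $\vee$-semilattice with a least element $0$, and let $v:L\to\mathbb{R}$ be a strictly isotone upper valuation or a strictly isotone lower valuation. Let $d_v(x,y)=v(x)+v(y)-2v^-(x,y)$ if $v$ is a lower valuation and $d_v(x,y)=2v^+(x,y)-v(x)-v(y)$ if $v$ is an upper valuation. If $d_v(x,y)=v^+(x,y)-v^-(x,y)$ for all $x,y\in L$, then $L$ is a modular lattice.
   Context: For a poset $(P,\le)$ and $x\in P$: $\downarrow x=\{x'\in P: x'\le x\}$, $\uparrow x=\{x'\in P: x\le x'\}$. A function $f:P\to\mathbb{R}$ is isotone if $x\le y\Rightarrow f(x)\le f(y)$, strictly isotone if $x<y\Rightarrow f(x)<f(y)$. For an isotone $f$ and $x,y\in P$ define $f^-(x,y)=\sup\{f(z):z\in\downarrow x\cap\downarrow y\}$ and $f^+(x,y)=\inf\{f(z):z\in\uparrow x\cap\uparrow y\}$, with $\inf\emptyset=+\infty$, $\sup\emptyset=-\infty$. An isotone $v$ is a lower valuation if $\downarrow x\cap\downarrow y\neq\emptyset$ for all $x,y$ and $v(x)+v(y)\le v^-(x,y)+v^+(x,y)$ for all $x,y$; it is an upper valuation if $\uparrow x\cap\uparrow y\neq\emptyset$ for all $x,y$ and $v^-(x,y)+v^+(x,y)\le v(x)+v(y)$ for all $x,y$. *)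

From HB Require Import structures.
From mathcomp Require Import all_boot all_order all_algebra.
Set Implicit Arguments. Unset Strict Implicit. Unset Printing Implicit Defensive.
Import Order.TTheory GRing.Theory Num.Theory.
Local Open Scope order_scope.

Section Defs.
Variables (disp : Order.disp_t) (L : finPOrderType disp) (R : realFieldType).

Definition is_lub (j x y : L) : Prop :=
  x <= j /\ y <= j /\ forall u : L, x <= u -> y <= u -> j <= u.
Definition is_glb (m x y : L) : Prop :=
  m <= x /\ m <= y /\ forall u : L, u <= x -> u <= y -> u <= m.

Definition isotone (f : L -> R) : Prop := forall x y : L, x <= y -> (f x <= f y)%R.
Definition strictly_isotone (f : L -> R) : Prop :=
  forall x y : L, x < y -> (f x < f y)%R.

(* maximum of a list of reals; None encodes sup of the empty set = -oo *)
Definition omax (s : seq R) : option R :=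
  if s is a :: s' then Some (foldr Num.max a s') else None.
(* minimum of a list of reals; None encodes inf of the empty set = +oo *)
Definition omin (s : seq R) : option R :=
  if s is a :: s' then Some (foldr Num.min a s') else None.

Definition fminus (f : L -> R) (x y : L) : option R :=
  omax [seq f z | z <- enum L & (z <= x) && (z <= y)].
Definition fplus (f : L -> R) (x y : L) : option R :=
  omin [seq f z | z <- enum L & (x <= z) && (y <= z)].

(* lower valuation: down-sets pairwise intersect and
   v x + v y <= v^-(x,y) + v^+(x,y)  (trivially true when v^+ = +oo) *)
Definition lower_valuation (v : L -> R) : Prop :=
  isotone v /\
  (forall x y : L, exists z : L, z <= x /\ z <= y) /\
  (forall (x y : L) (m : R), fminus v x y = Some m ->
     forall p : R, fplus v x y = Some p -> (v x + v y <= m + p)%R).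

(* upper valuation: up-sets pairwise intersect and
   v^-(x,y) + v^+(x,y) <= v x + v y  (trivially true when v^- = -oo) *)
Definition upper_valuation (v : L -> R) : Prop :=
  isotone v /\
  (forall x y : L, exists z : L, x <= z /\ y <= z) /\
  (forall (x y : L) (p : R), fplus v x y = Some p ->
     forall m : R, fminus v x y = Some m -> (m + p <= v x + v y)%R).

(* L is a modular lattice: all binary meets and joins exist, and for x <= z,
   x ∨ (y ∧ z) = (x ∨ y) ∧ z. *)
Definition modular_lattice : Prop :=
  (forall x y : L, exists j, is_lub j x y) /\
  (forall x y : L, exists m, is_glb m x y) /\
  (forall x y z m a j b : L, x <= z ->
     is_glb m y z -> is_lub a x m -> is_lub j x y -> is_glb b j z -> a = b).

End Defs.

From HB Require Import structures.
From mathcomp Require Import all_boot all_order all_algebra.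
From mathcomp Require Import lra.
Import Order.TTheory GRing.Theory Num.Theory.

(* Let v be strictly isotone on the finite join-semilattice L
   with least element.
   (1) L is a lattice: among the lower bounds of x and y (there is one, the
       least element) pick one, m, of maximal v-value; for any other lower
       bound u, the join u \/ m is again a lower bound above m, so by strict
       isotony it equals m, i.e. u <= m.
   (2) In a lattice, v^- and v^+ are just v at the meet and at the join, so
       either form of the hypothesis d_v = v^+ - v^- reduces to the
       valuation identity v x + v y = v (x /\ y) + v (x \/ y).
   (3) A lattice carrying a strictly isotone v satisfying this identity is
       modular: for x <= z the modular inequality x \/ (y /\ z) <= (x \/ y) /\ z
       always holds, and adding up four instances of the identity shows that
       both sides have the same v-value, hence they are equal. *)

Local Open Scope order_scope.

Lemma foldr_max_spec d (T : orderType d) (h : T) (t : seq T) :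
  foldr Order.max h t \in h :: t /\
  forall e, e \in h :: t -> e <= foldr Order.max h t.
Proof.
elim: t => [|c t [IHin IHub]] /=.
  by split=> [|e]; rewrite ?inE // => /eqP->.
split.
  move: IHin; set r := foldr _ h t => IHin.
  rewrite /Order.max; case: ifP => _; last by rewrite !inE eqxx orbT.
  by move: IHin; rewrite !inE => /orP[]->; rewrite ?orbT.
move=> e; rewrite !inE le_max => /orP[/eqP->|/orP[/eqP->|He]].
- by rewrite IHub ?orbT // inE eqxx.
- by rewrite lexx.
- by rewrite IHub ?orbT // inE He orbT.
Qed.

Lemma foldr_min_spec d (T : orderType d) (h : T) (t : seq T) :
  foldr Order.min h t \in h :: t /\
  forall e, e \in h :: t -> foldr Order.min h t <= e.
Proof.
elim: t => [|c t [IHin IHlb]] /=.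
  by split=> [|e]; rewrite ?inE // => /eqP->.
split.
  move: IHin; set r := foldr _ h t => IHin.
  rewrite /Order.min; case: ifP => _; first by rewrite !inE eqxx orbT.
  by move: IHin; rewrite !inE => /orP[]->; rewrite ?orbT.
move=> e; rewrite !inE ge_min => /orP[/eqP->|/orP[/eqP->|He]].
- by rewrite IHlb ?orbT // inE eqxx.
- by rewrite lexx.
- by rewrite IHlb ?orbT // inE He orbT.
Qed.

Lemma omax_eq (R : realFieldType) (s : seq R) (a : R) :
  a \in s -> (forall e, e \in s -> e <= a) -> omax s = Some a.
Proof.
case: s => [//|h t] Ha Hub /=; congr Some.
have [Hin Hmax] := @foldr_max_spec _ R h t.
by apply/eqP; rewrite eq_le Hub // Hmax.
Qed.

Lemma omin_eq (R : realFieldType) (s : seq R) (a : R) :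
  a \in s -> (forall e, e \in s -> a <= e) -> omin s = Some a.
Proof.
case: s => [//|h t] Ha Hlb /=; congr Some.
have [Hin Hmin] := @foldr_min_spec _ R h t.
by apply/eqP; rewrite eq_le Hmin // Hlb.
Qed.

Section StrictlyIsotone.
Context {disp : Order.disp_t} {L : finPOrderType disp} {R : realFieldType}.
Context {v : L -> R}.
Hypothesis v_strict : strictly_isotone v.

Lemma strictly_isotone_isotone : isotone v.
Proof. by move=> x y; rewrite le_eqVlt => /orP[/eqP->//|/v_strict/ltW]. Qed.

Lemma strictly_isotone_eq {a b : L} : a <= b -> v a = v b -> a = b.
Proof.
rewrite le_eqVlt => /orP[/eqP//|/v_strict].
by move=> Hlt Hv; move: Hlt; rewrite Hv ltxx.
Qed.

Lemma fminus_glb {m x y : L} : is_glb m x y -> fminus v x y = Some (v m).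
Proof.
move=> [mx [my Hm]]; apply: omax_eq.
  by apply: map_f; rewrite mem_filter mx my mem_enum.
move=> e /mapP[z]; rewrite mem_filter mem_enum andbT => /andP[zx zy] ->.
exact/strictly_isotone_isotone/Hm.
Qed.

Lemma fplus_lub {j x y : L} : is_lub j x y -> fplus v x y = Some (v j).
Proof.
move=> [xj [yj Hj]]; apply: omin_eq.
  by apply: map_f; rewrite mem_filter xj yj mem_enum.
move=> e /mapP[z]; rewrite mem_filter mem_enum andbT => /andP[xz yz] ->.
exact/strictly_isotone_isotone/Hj.
Qed.

Hypothesis has_join : forall x y : L, exists j : L, is_lub j x y.

(* Step (1): a finite join-semilattice with a least element is a lattice;
   the meet of x and y is a lower bound of maximal v-value. *)
Lemma glb_exists (z0 : L) : (forall x : L, z0 <= x) ->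
  forall x y : L, exists m : L, is_glb m x y.
Proof.
move=> z0_least x y.
pose lower := [pred z : L | (z <= x) && (z <= y)].
have lower_z0 : lower z0 by rewrite /= !z0_least.
case: (arg_maxP v lower_z0) => m /andP[mx my] m_max.
exists m; split=> //; split=> // u ux uy.
have [w [uw [mw w_least]]] := has_join u m.
have w_lower : lower w by rewrite /= !w_least.
have vm_eq_vw : v m = v w.
  by apply/le_anti; rewrite strictly_isotone_isotone //=; exact: (m_max w w_lower).
by rewrite (strictly_isotone_eq mw vm_eq_vw).
Qed.

Lemma glb_below {x y z m g : L} :
  x <= z -> is_glb m y z -> is_glb g x m -> is_glb g x y.
Proof.
move=> xz [my [mz m_greatest]] [gx [gm g_greatest]].
split=> //; split; first exact: le_trans gm my.
by move=> u ux uy; apply: g_greatest => //; apply: m_greatest => //; apply: le_trans xz.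
Qed.

Lemma lub_above {x y z j k : L} :
  x <= z -> is_lub j x y -> is_lub k j z -> is_lub k y z.
Proof.
move=> xz [xj [yj j_least]] [jk [zk k_least]].
split; first exact: le_trans yj jk.
by split=> // u yu zu; apply: k_least => //; apply: j_least => //; apply: le_trans zu.
Qed.

Lemma modular_inequality {x y z m a j b : L} : x <= z ->
  is_glb m y z -> is_lub a x m -> is_lub j x y -> is_glb b j z -> a <= b.
Proof.
move=> xz [my [mz _]] [xa [ma a_least]] [xj [yj _]] [_ [_ b_greatest]].
by apply: b_greatest; apply: a_least => //; apply: le_trans yj.
Qed.

Hypothesis has_meet : forall x y : L, exists m : L, is_glb m x y.
Hypothesis v_valuation : forall x y m j : L,
  is_glb m x y -> is_lub j x y -> (v x + v y = v m + v j)%R.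

Lemma modular_of_valuation : modular_lattice L.
Proof.
split=> //; split=> // x y z m a j b xz Hm Ha Hj Hb.
have [g Hg] := has_meet x m.
have [k Hk] := has_join j z.
have E1 := v_valuation _ _ _ _ Hg Ha.
have E2 := v_valuation _ _ _ _ (glb_below xz Hm Hg) Hj.
have E3 := v_valuation _ _ _ _ Hm (lub_above xz Hj Hk).
have E4 := v_valuation _ _ _ _ Hb Hk.
apply: strictly_isotone_eq; first exact: modular_inequality Hm Ha Hj Hb.
lra.
Qed.

End StrictlyIsotone.

Lemma valuation_of_distance (disp : Order.disp_t) (L : finPOrderType disp)
    (R : realFieldType) (v : L -> R) :
  strictly_isotone v ->
  (lower_valuation v /\
     forall (x y : L) (m p : R), fminus v x y = Some m ->
       fplus v x y = Some p -> (v x + v y - 2%:R * m = p - m)%R)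
  \/
  (upper_valuation v /\
     forall (x y : L) (m p : R), fminus v x y = Some m ->
       fplus v x y = Some p -> (2%:R * p - v x - v y = p - m)%R) ->
  forall x y m j : L, is_glb m x y -> is_lub j x y -> (v x + v y = v m + v j)%R.
Proof.
move=> v_strict Hd x y m j Hm Hj.
have Em := fminus_glb v_strict Hm; have Ej := fplus_lub v_strict Hj.
by case: Hd => [[_ Hdist]|[_ Hdist]]; have := Hdist _ _ _ _ Em Ej; lra.
Qed.

Theorem mainTheorem3 (disp : Order.disp_t) (L : finPOrderType disp)
    (R : realFieldType) (v : L -> R)
    (Hbot : exists z0 : L, forall x : L, z0 <= x)
    (Hjoin : forall x y : L, exists j : L, is_lub j x y)
    (Hstrict : strictly_isotone v)
    (Hd : (lower_valuation v /\
             forall (x y : L) (m p : R), fminus v x y = Some m ->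
               fplus v x y = Some p ->
               (v x + v y - 2%:R * m = p - m)%R)
          \/
          (upper_valuation v /\
             forall (x y : L) (m p : R), fminus v x y = Some m ->
               fplus v x y = Some p ->
               (2%:R * p - v x - v y = p - m)%R)) :
  modular_lattice L.
Proof.
have [z0 z0_least] := Hbot.
apply: (modular_of_valuation Hstrict Hjoin).
- exact: glb_exists Hstrict Hjoin z0 z0_least.
- exact: valuation_of_distance Hstrict Hd.
Qed.
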